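(* Let $E$ be a nonempty bounded subset of $M_a$ and $p\in E$. If $i\in\Lambda(E)$, then $p+\alpha e_i\in\mathrm{GS}(E,p)$ for all $\alpha\in\mathbb R$.
   Context: Let $a=\{a_i\}$ be a sequence of positive reals with $\sum_i a_i^2<\infty$, $M_a=\{x\in\mathbb{R}^{\mathbb N}:\sum_i a_i^2x_i^2<\infty\}$ with inner product $\langle x,y\rangle_a=\sum_i a_i^2x_iy_i$ and norm $\|x\|_a=\sqrt{\langle x,x\rangle_a}$ (a Hilbert space). $e_i$ denotes the sequence with $1$ in position $i$ and $0$ elsewhere. For nonempty $E\subset M_a$, $\Lambda(E)$ is the set of $i\in\mathbb N$ for which there exist $x\in E$ and $\alpha\in\mathbb R\setminus\{0\}$ with $x+\alpha e_i\in E$. The generalized linear span of $E$ with respect to $p\in E$ is $\mathrm{GS}(E,p)=\{p+\sum_i\alpha_i(x_i-p)\in M_a: x_i\in E,\ \alpha_i\in\mathbb R\}$, where the index $i$ runs over a finite or countably infinite subset of $\mathbb N$ and infinite sums are limits in $\|\cdot\|_a$ of their partial sums. *)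

From Stdlib Require Import Reals Arith.
From Coquelicot Require Import Coquelicot.
Open Scope R_scope.

Definition seqR := nat -> R.

Definition admissible_weight (a : seqR) : Prop :=
  (forall i, 0 < a i) /\ ex_series (fun i => (a i) ^ 2).

Definition in_Ma (a : seqR) (x : seqR) : Prop :=
  ex_series (fun i => (a i) ^ 2 * (x i) ^ 2).

Definition inner_a (a : seqR) (x y : seqR) : R :=
  Series (fun i => (a i) ^ 2 * x i * y i).

Definition norm_a (a : seqR) (x : seqR) : R := sqrt (inner_a a x x).

Definition vadd (x y : seqR) : seqR := fun i => x i + y i.
Definition vsub (x y : seqR) : seqR := fun i => x i - y i.
Definition vscal (c : R) (x : seqR) : seqR := fun i => c * x i.

Definition unit_vec (i : nat) : seqR := fun j => if Nat.eqb j i then 1 else 0.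

Definition bounded_a (a : seqR) (E : seqR -> Prop) : Prop :=
  exists C : R, forall x, E x -> norm_a a x <= C.

Definition Lambda (E : seqR -> Prop) (i : nat) : Prop :=
  exists (x : seqR) (alpha : R),
    E x /\ alpha <> 0 /\ E (vadd x (vscal alpha (unit_vec i))).

Fixpoint partial_comb (p : seqR) (xs : nat -> seqR) (al : nat -> R) (n : nat)
  : seqR :=
  match n with
  | O => p
  | S m => vadd (partial_comb p xs al m) (vscal (al m) (vsub (xs m) p))
  end.

(* Generalized linear span GS(E,p): elements y of M_a of the form
   p + sum_k alpha_k (x_k - p) with x_k in E, where the sum is either finite
   or countably infinite; an infinite sum is the ||.||_a-limit of its partial
   sums. (Indexing a finite / countably infinite subset of N in increasing
   order by 0,1,2,... .) *)
Definition GS (a : seqR) (E : seqR -> Prop) (p : seqR) (y : seqR) : Prop :=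
  in_Ma a y /\
  ((exists (n : nat) (xs : nat -> seqR) (al : nat -> R),
      (forall k, (k < n)%nat -> E (xs k)) /\ y = partial_comb p xs al n)
   \/
   (exists (xs : nat -> seqR) (al : nat -> R),
      (forall k, E (xs k)) /\
      is_lim_seq (fun n => norm_a a (vsub (partial_comb p xs al n) y)) 0)).

(* If x and x + beta e_i both lie in E (beta <> 0), then
   alpha e_i = (alpha/beta) ((x + beta e_i) - p) - (alpha/beta) (x - p),
   so p + alpha e_i is a two-term combination of the generalized span; it lies
   in M_a because M_a is a vector space containing every e_i. *)

From Stdlib Require Import Reals Lra Lia FunctionalExtensionality.
From Coquelicot Require Import Coquelicot.
Open Scope R_scope.

Lemma ex_series_eventually_zero (u : nat -> R) (n : nat) :
  (forall k, (n <= k)%nat -> u k = 0) -> ex_series u.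
Proof.
  intros Hu. apply (ex_series_incr_n u n).
  exists 0. apply (is_series_ext (fun _ => 0)).
  - intros k. rewrite Hu by lia. reflexivity.
  - apply (filterlim_ext (fun _ => 0)).
    + intros m. rewrite sum_n_const. simpl. ring.
    + apply filterlim_const.
Qed.

Lemma in_Ma_unit_vec (a : seqR) (i : nat) : in_Ma a (unit_vec i).
Proof.
  apply (ex_series_eventually_zero _ (S i)). intros k Hk.
  unfold unit_vec. replace (Nat.eqb k i) with false.
  - ring.
  - symmetry. apply Nat.eqb_neq. lia.
Qed.

Lemma in_Ma_vscal (a : seqR) (c : R) (x : seqR) :
  in_Ma a x -> in_Ma a (vscal c x).
Proof.
  unfold in_Ma. intros Hx.
  apply (@ex_series_ext R_AbsRing R_NormedModule (fun j => c ^ 2 * (a j ^ 2 * x j ^ 2))).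
  - intros j. unfold vscal.
    change (c ^ 2 * (a j ^ 2 * x j ^ 2) = a j ^ 2 * (c * x j) ^ 2). ring.
  - exact (@ex_series_scal_l R_AbsRing R_NormedModule (c ^ 2) _ Hx).
Qed.

Lemma in_Ma_vadd (a : seqR) (x y : seqR) :
  in_Ma a x -> in_Ma a y -> in_Ma a (vadd x y).
Proof.
  intros Hx Hy.
  apply (@ex_series_le R_AbsRing R_CompleteNormedModule _
           (fun j => 2 * (a j ^ 2 * x j ^ 2) + 2 * (a j ^ 2 * y j ^ 2))).
  - intros j. unfold vadd.
    assert (Hsq : (x j + y j) ^ 2 <= 2 * x j ^ 2 + 2 * y j ^ 2)
      by (pose proof (pow2_ge_0 (x j - y j)); nra).
    assert (Ha2 : 0 <= a j ^ 2) by apply pow2_ge_0.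
    assert (Hpos : 0 <= a j ^ 2 * (x j + y j) ^ 2)
      by (apply Rmult_le_pos; [exact Ha2 | apply pow2_ge_0]).
    change (Rabs (a j ^ 2 * (x j + y j) ^ 2)
            <= 2 * (a j ^ 2 * x j ^ 2) + 2 * (a j ^ 2 * y j ^ 2)).
    rewrite Rabs_pos_eq by exact Hpos.
    nra.
  - apply (ex_series_plus (fun j => 2 * (a j ^ 2 * x j ^ 2))
                          (fun j => 2 * (a j ^ 2 * y j ^ 2))).
    + exact (@ex_series_scal_l R_AbsRing R_NormedModule 2 _ Hx).
    + exact (@ex_series_scal_l R_AbsRing R_NormedModule 2 _ Hy).
Qed.

Lemma partial_comb_two_points (p x v : seqR) (beta alpha : R) :
  beta <> 0 ->
  partial_comb p
    (fun k => match k with O => vadd x (vscal beta v) | _ => x end)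
    (fun k => match k with O => alpha / beta | _ => - (alpha / beta) end) 2
  = vadd p (vscal alpha v).
Proof.
  intros Hbeta. apply functional_extensionality. intros j.
  simpl. unfold vadd, vscal, vsub. field. exact Hbeta.
Qed.

Theorem lemma3p3 (a : seqR) (E : seqR -> Prop) (p : seqR) (i : nat) :
  admissible_weight a ->
  (forall x, E x -> in_Ma a x) ->
  (exists x, E x) ->
  bounded_a a E ->
  E p ->
  Lambda E i ->
  forall alpha : R, GS a E p (vadd p (vscal alpha (unit_vec i))).
Proof.
  intros _ HM _ _ Hp [x [beta [Hx [Hbeta Hxb]]]] alpha.
  split.
  - apply in_Ma_vadd.
    + exact (HM p Hp).
    + apply in_Ma_vscal, in_Ma_unit_vec.
  - left. rewrite <- (partial_comb_two_points p x (unit_vec i) beta alpha Hbeta).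
    eexists 2%nat, _, _. split; [| reflexivity].
    intros [|k] _; assumption.
Qed.
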